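(* Let $U\subset(0,1)^m$ be open and let $b:U\to\mathbb{R}$ be given by $b(x)=ax^\mu=a\prod_{i=1}^m x_i^{\mu_i}$ for some $a\in\mathbb{R}$ and $\mu\in\mathbb{R}^m$, and suppose $b$ is $C^1$-bounded (i.e. $b$ and all its first-order partial derivatives are bounded on $U$). Then there exist $A,B>0$ depending only on $b$ such that the following holds: for every integer $r>0$, every integer $l\ge1$ and all $n_1,\ldots,n_m$ with $n_i\ge r^l$ for all $i$, letting $\phi:(0,1)^m\to(0,1)^m$, $\phi(x)=(x_1^{n_1},\ldots,x_m^{n_m})$, and $V=\phi^{-1}(U)$, the map $(b\circ\phi)^{1/r^{l-1}}:V\to\mathbb{R}$ is $(\max(n_1,\ldots,n_m)A,B,0)$-mild up to order $r$.
   Context: For $V\subset\mathbb{R}^d$ open, $A,B>0$, $C\ge0$, $r$ a positive integer: $g:V\to\mathbb{R}$ is $(A,B,C)$-mild up to order $r$ if it is $C^r$ and $|g^{(\nu)}(x)|\le B^{C+1}A^{|\nu|}|\nu|!^{C+1}$ for all $x\in V$ and all $\nu\in\mathbb{N}^d$ with $|\nu|\le r$, where $g^{(\nu)}=\partial^{|\nu|}g/\partial x_1^{\nu_1}\cdots\partial x_d^{\nu_d}$ and $|\nu|=\sum\nu_i$. *)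

From HB Require Import structures.
From mathcomp Require Import all_boot all_order all_algebra.
From mathcomp Require Import all_classical all_reals all_analysis.
Set Implicit Arguments. Unset Strict Implicit. Unset Printing Implicit Defensive.
Import Order.TTheory GRing.Theory Num.Theory.
Import numFieldNormedType.Exports.
Local Open Scope classical_set_scope.
Local Open Scope ring_scope.

Section Defs.
Variables (R : realType) (m : nat).

Definition ebasis (i : 'I_m) : 'rV[R]_m := delta_mx 0 i.

Definition partial (i : 'I_m) (f : 'rV[R]_m -> R) : 'rV[R]_m -> R :=
  fun x => 'D_(ebasis i) f x.

(* iterated partial derivative along a sequence of directions (first applied = last) *)
Definition ipartial (s : seq 'I_m) (f : 'rV[R]_m -> R) : 'rV[R]_m -> R :=
  foldr partial f s.

Definition pderiv (nu : 'I_m -> nat) (f : 'rV[R]_m -> R) : 'rV[R]_m -> R :=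
  foldr (fun i g => iter (nu i) (partial i) g) f (enum 'I_m).

Definition mabs (nu : 'I_m -> nat) : nat := (\sum_(i < m) nu i)%N.

Definition Cr (V : set 'rV[R]_m) (r : nat) (f : 'rV[R]_m -> R) : Prop :=
  forall s : seq 'I_m, (size s <= r)%N ->
    (forall x, V x -> {for x, continuous (ipartial s f)}) /\
    ((size s < r)%N -> forall x, V x -> forall i, derivable (ipartial s f) x (ebasis i)).

Definition mild (V : set 'rV[R]_m) (A B C : R) (r : nat) (g : 'rV[R]_m -> R) : Prop :=
  Cr V r g /\
  forall x, V x -> forall nu : 'I_m -> nat, (mabs nu <= r)%N ->
    `|pderiv nu g x| <= B `^ (C + 1) * A ^+ mabs nu * ((mabs nu)`!%:R) `^ (C + 1).

Definition C1_bounded (V : set 'rV[R]_m) (f : 'rV[R]_m -> R) : Prop :=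
  Cr V 1 f /\ exists M : R, forall x, V x ->
    `|f x| <= M /\ forall i, `|partial i f x| <= M.

Definition unit_cube : set 'rV[R]_m := [set x | forall i, 0 < x 0 i < 1].

Definition monomial (a : R) (mu : 'I_m -> R) : 'rV[R]_m -> R :=
  fun x => a * \prod_(i < m) (x 0 i) `^ (mu i).

Definition phi_map (n : 'I_m -> nat) (x : 'rV[R]_m) : 'rV[R]_m :=
  \row_i (x 0 i) ^+ (n i).

(* real k-th root of g, k > 0: sg(g) |g|^(1/k) (coincides with the real root
   whenever it is defined) *)
Definition kroot (k : nat) (g : 'rV[R]_m -> R) : 'rV[R]_m -> R :=
  fun x => Num.sg (g x) * `|g x| `^ (k%:R)^-1.

End Defs.

From HB Require Import structures.
From mathcomp Require Import all_boot all_order all_algebra.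
From mathcomp Require Import all_classical all_reals all_analysis.
From mathcomp Require Import ring lra.
Set Implicit Arguments.
Unset Strict Implicit.
Unset Printing Implicit Defensive.
Import Order.TTheory GRing.Theory Num.Theory.
Import numFieldNormedType.Exports.
Local Open Scope classical_set_scope.
Local Open Scope ring_scope.

(* Since every x in V lies in the open unit cube, the root g = (b o phi)^(1/k), k = r^(l-1),
   is the monomial c x^alpha with alpha_j = n_j mu_j / k.  Differentiating along a sequence s of
   |s| <= r coordinate directions gives c C_s x^(alpha - count s), where C_s is a product of |s|
   factors alpha_j - t with 0 <= t < |s|, so |C_s| <= (A max_i n_i)^|s| |s|!.  It remains to bound
   |c| x^(alpha - count s) = |b(phi x)|^(1/k) / prod_(i in s) x_i by B.  The C^1 bound on b gives
   |b(y)| <= B y_j for every direction j with mu_j <> 0 (along the others the derivative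
   vanishes).  Hence sigma := (|b(phi x)| / B)^(1/(k r)) satisfies
   sigma^(k r) <= x_j^(n_j) <= x_j^(k r) for j in s, as n_j >= r^l = k r and x_j < 1, i.e.
   sigma <= x_j, and |b(phi x)|^(1/k) = B^(1/k) sigma^r <= B sigma^|s| <= B prod_(i in s) x_i. *)

Lemma prod_count_mem (R : comPzSemiRingType) (I : finType) (F : I -> R) (s : seq I) :
  \prod_(j : I) F j ^+ count_mem j s = \prod_(i <- s) F i.
Proof.
elim: s => [|i s IH]; first by rewrite big_nil; apply: big1 => j _; rewrite expr0.
rewrite big_cons -IH (bigD1 i) //= [in RHS](bigD1 i) //= eqxx add1n exprS -mulrA.
by do 2 congr (_ * _); apply: eq_bigr => j /negbTE ji; rewrite eq_sym ji.
Qed.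

Lemma powR_prod (R : realType) (I : Type) (s : seq I) (F : I -> R) (p : R) :
  (forall i, 0 <= F i) -> (\prod_(i <- s) F i) `^ p = \prod_(i <- s) F i `^ p.
Proof.
move=> F0; elim: s => [|i s IH]; first by rewrite !big_nil powR1.
by rewrite !big_cons powRM ?IH //; exact: prodr_ge0.
Qed.

Lemma exp_size_le_prod (R : numDomainType) (I : eqType) (s : seq I) (F : I -> R) (c : R) :
  0 <= c -> {in s, forall i, c <= F i} -> c ^+ size s <= \prod_(i <- s) F i.
Proof.
move=> c0; elim: s => [|i s IH] cF; first by rewrite big_nil expr0.
rewrite big_cons exprS ler_pM ?exprn_ge0 ?cF ?mem_head //.
by apply: IH => j js; apply: cF; rewrite in_cons js orbT.
Qed.

Lemma continuous_powR (R : realType) (p t : R) :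
  0 < t -> {for t, continuous (fun s : R => s `^ p)}.
Proof.
move=> t0; apply/differentiable_continuous/derivable1_diffP.
by apply: derivable_powR; rewrite in_itv /= t0.
Qed.

Lemma powR_inv_le_prod (R : realType) (I : eqType) (s : seq I) (x : I -> R)
    (T B : R) (k r : nat) :
  (0 < k)%N -> (0 < r)%N -> (size s <= r)%N -> 0 <= T <= B -> 1 <= B ->
  {in s, forall j, 0 <= x j /\ T <= B * x j ^+ (k * r)} ->
  T `^ k%:R^-1 <= B * \prod_(j <- s) x j.
Proof.
move=> k0 r0 sr /andP[T0 TB] B1 hx.
have B0 : 0 < B by exact: lt_le_trans B1.
have kr0 : (0 < k * r)%N by rewrite muln_gt0 k0.
set t := T / B.
have Tt : T = B * t by rewrite /t mulrC divfK ?gt_eqF.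
have t0 : 0 <= t by rewrite /t divr_ge0 // ltW.
set sigma := t `^ (k * r)%:R^-1.
have sigma0 : 0 <= sigma by exact: powR_ge0.
have sigma_kr : sigma ^+ (k * r) = t.
  by rewrite -powR_mulrn // -powRrM mulVf ?powRr1 // pnatr_eq0 -lt0n.
have sigma1 : sigma <= 1.
  by rewrite -(ler_pXn2r kr0) ?nnegrE // sigma_kr expr1n /t ler_pdivrMr // mul1r.
have sigma_x : {in s, forall j, sigma <= x j}.
  move=> j /hx[xj0 Txj]; rewrite -(ler_pXn2r kr0) ?nnegrE // sigma_kr.
  by rewrite /t ler_pdivrMr // mulrC.
have t_root : t `^ k%:R^-1 = sigma ^+ r.
  rewrite -sigma_kr -powR_mulrn // -powRrM -powR_mulrn //; congr (_ `^ _).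
  by rewrite natrM; field; rewrite pnatr_eq0 -lt0n.
rewrite Tt powRM ?(ltW B0) // t_root.
apply: ler_pM; [exact: powR_ge0 | exact: exprn_ge0 | |].
  by apply: ler1_powR => //; rewrite invf_le1 ?ler1n ?ltr0n.
exact: le_trans (ler_wiXn2l sigma0 sigma1 sr) (exp_size_le_prod sigma0 sigma_x).
Qed.

Section Monomial.
Variables (R : realType) (m : nat).
Implicit Types (x y : 'rV[R]_m) (c : R) (b : 'I_m -> R).

Definition orthant : set 'rV[R]_m := [set x | forall j, 0 < x 0 j].

Lemma unit_cube_orthant : @unit_cube R m `<=` orthant.
Proof. by move=> x cx j; case/andP: (cx j). Qed.

Lemma orthant_nbhs x : orthant x -> \forall y \near x, orthant y.
Proof.
move=> x0; apply: (@filter_forall _ _ (fun j (y : 'rV[R]_m) => 0 < y 0 j) (nbhs x)) => j.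
exact: (@coord_continuous R 1 m 0 j x _ (lt_nbhsr (x0 j))).
Qed.

Lemma derive_ebasis_slice (f : 'rV[R]_m -> R) (p : R -> R) x i :
  (forall h, f (h *: ebasis R i + x) = p (h + x 0 i)) ->
  'D_(ebasis R i) f x = 'D_1 p (x 0 i) /\
  (derivable f x (ebasis R i) <-> derivable p (x 0 i) 1).
Proof.
move=> fp.
have quotientE : (fun h : R => h^-1 *: ((f \o shift x) (h *: ebasis R i) - f x)) =
                 (fun h : R => h^-1 *: ((p \o shift (x 0 i)) (h *: 1) - p (x 0 i))).
  apply/funext => h; have := fp 0; rewrite scale0r !add0r => <-.
  by rewrite /= /shift /= fp [h *: 1]mulr1.
by rewrite /derive /derivable quotientE.
Qed.

Lemma monomial_shift c b i x h :
  monomial c b (h *: ebasis R i + x) =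
  (c * \prod_(j < m | j != i) x 0 j `^ b j) * (h + x 0 i) `^ b i.
Proof.
rewrite /monomial (bigD1 i) //= !mxE !eqxx /= mulr1 [_ `^ b i * _]mulrC mulrA.
congr (_ * _ * _); apply: eq_bigr => j /negbTE ji.
by rewrite !mxE ji mulr0 add0r.
Qed.

Lemma monomial_partial c b i x : orthant x ->
  derivable (monomial c b) x (ebasis R i) /\
  partial i (monomial c b) x = monomial (c * b i) (fun j => b j - (j == i)%:R) x.
Proof.
move=> x0; set K := c * \prod_(j < m | j != i) x 0 j `^ b j.
have [Dslice derivableE] :=
  @derive_ebasis_slice _ (fun t => K * t `^ b i) x i (monomial_shift c b i x).
have dp : is_derive (x 0 i) 1 (fun t => K * t `^ b i) (K * (b i * x 0 i `^ (b i - 1))).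
  exact/is_deriveZ/is_derive1_powR.
split; first by apply/derivableE; exact: ex_derive.
rewrite /partial Dslice derive_val /monomial (bigD1 i) //= eqxx /K.
rewrite [X in _ = _ * (_ * X)](eq_bigr (fun j => x 0 j `^ b j)); first by ring.
by move=> j /negbTE ->; rewrite subr0.
Qed.

Lemma monomial_factor c b i x : orthant x ->
  monomial c b x = x 0 i * monomial c (fun j => b j - (j == i)%:R) x.
Proof.
move=> x0; rewrite /monomial (bigD1 i) //= [in RHS](bigD1 i) //= eqxx.
rewrite [in RHS](eq_bigr (fun j => x 0 j `^ b j)); last first.
  by move=> j /negbTE ->; rewrite subr0.
rewrite powRB ?(lt0r_neq0 (x0 i)) ?implybT // powRr1 ?(ltW (x0 i)) //.
by field; exact: lt0r_neq0.
Qed.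

Lemma continuous_monomial c b x : orthant x -> {for x, continuous (monomial c b)}.
Proof.
move=> x0; suff prod_cont : forall s : seq 'I_m,
    {for x, continuous (fun y : 'rV[R]_m => \prod_(j <- s) y 0 j `^ b j)}.
  have -> : monomial c b = (fun=> c) \* (fun y => \prod_(j < m) y 0 j `^ b j) by [].
  by apply: continuousM; [exact: cst_continuous | exact: prod_cont].
elim=> [|j s IH].
  rewrite (_ : (fun y => _) = fun=> 1); first exact: cst_continuous.
  by apply/funext => y; rewrite big_nil.
rewrite (_ : (fun y => _) =
  (fun y => y 0 j `^ b j) \* (fun y => \prod_(j <- s) y 0 j `^ b j)); last first.
  by apply/funext => y; rewrite big_cons.
apply: continuousM IH.
apply: (@continuous_comp _ _ _ (fun y : 'rV[R]_m => y 0 j) (fun t => t `^ b j)).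
  exact: coord_continuous.
exact: continuous_powR.
Qed.

Fixpoint ipartial_coef b (s : seq 'I_m) : R :=
  if s is i :: s' then ipartial_coef b s' * (b i - (count_mem i s')%:R) else 1.

Definition ipartial_exponent b (s : seq 'I_m) : 'I_m -> R :=
  fun j => b j - (count_mem j s)%:R.

Lemma ipartial_coef_eq0 b s j : j \in s -> b j = 0 -> ipartial_coef b s = 0.
Proof.
move=> + bj0; elim: s => [|i s IH] //=; rewrite in_cons => /orP[/eqP ji|js].
  subst j; have [/IH -> |/count_memPn ->] := boolP (i \in s); first by rewrite mul0r.
  by rewrite bj0 subr0 mulr0.
by rewrite IH // mul0r.
Qed.

Lemma ipartial_coef_bound b s E : (forall j, `|b j| + 1 <= E) ->
  `|ipartial_coef b s| <= E ^+ size s * (size s)`!%:R.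
Proof.
move=> bE; elim: s => [|i s IH] /=; first by rewrite normr1 expr0 mul1r.
have E0 : 0 <= E by apply: le_trans (bE i); rewrite addr_ge0.
have count_le : (count_mem i s)%:R <= (size s)%:R :> R by rewrite ler_nat count_size.
have factor_le : `|b i - (count_mem i s)%:R| <= E * (size s).+1%:R.
  apply: le_trans (ler_normB _ _) _; rewrite normr_nat -addn1 natrD.
  have := bE i; have := normr_ge0 (b i); have : 0 <= (size s)%:R :> R by [].
  nra.
rewrite normrM factS natrM exprS mulrACA mulrC.
exact: ler_pM.
Qed.

Section AgreeWithMonomial.
Variables (g : 'rV[R]_m -> R) (c : R) (b : 'I_m -> R).
Hypothesis g_monomial : forall y, orthant y -> g y = monomial c b y.

Lemma ipartial_monomial_near s x : orthant x ->
  \forall y \near x,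
    ipartial s g y = monomial (c * ipartial_coef b s) (ipartial_exponent b s) y.
Proof.
elim: s x => [|i s IH] x x0; near=> y; have y0 : orthant y by near: y; exact: orthant_nbhs.
  rewrite /= g_monomial // mulr1; congr monomial.
  by apply/funext => j; rewrite /ipartial_exponent subr0.
rewrite /= /partial (near_eq_derive _ (IH y y0)) -/(partial i _ y).
have [_ ->] := monomial_partial (c * ipartial_coef b s) (ipartial_exponent b s) i y0.
rewrite mulrA; congr monomial; apply/funext => j.
by rewrite /ipartial_exponent /= natrD opprD addrA eq_sym addrAC.
Unshelve. all: by end_near.
Qed.

Lemma ipartial_monomial s x : orthant x ->
  ipartial s g x = monomial (c * ipartial_coef b s) (ipartial_exponent b s) x.
Proof.
by move=> x0; have near_mono := ipartial_monomial_near s x0; exact: nbhs_singleton near_mono.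
Qed.

Lemma ipartial_monomial_smooth s x : orthant x ->
  {for x, continuous (ipartial s g)} /\
  forall i, derivable (ipartial s g) x (ebasis R i).
Proof.
move=> x0; have near_mono := ipartial_monomial_near s x0.
have near_eq :
    {near x, monomial (c * ipartial_coef b s) (ipartial_exponent b s) =1 ipartial s g}.
  by near=> y; rewrite (near near_mono y).
split=> [|i].
  have := cvg_trans (near_eq_cvg near_eq) (continuous_monomial x0).
  by move/(_ (nbhs_filter x)); rewrite -(ipartial_monomial s x0).
apply: near_eq_derivable near_eq _.
exact: (monomial_partial _ _ i x0).1.
Unshelve. all: by end_near.
Qed.

Lemma Cr_monomial V r : V `<=` orthant -> Cr V r g.
Proof.
move=> Vorthant s _; split=> [x /Vorthant x0|_ x /Vorthant x0].
  exact: (ipartial_monomial_smooth s x0).1.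
exact: (ipartial_monomial_smooth s x0).2.
Qed.

End AgreeWithMonomial.

Definition pderiv_seq (nu : 'I_m -> nat) : seq 'I_m :=
  flatten [seq nseq (nu i) i | i <- enum 'I_m].

Lemma pderiv_ipartial nu (f : 'rV[R]_m -> R) : pderiv nu f = ipartial (pderiv_seq nu) f.
Proof.
rewrite /pderiv /ipartial /pderiv_seq; elim: (enum 'I_m) => [|i s IH] //=.
by rewrite foldr_cat IH; elim: (nu i) => [|n IHn] //=; rewrite IHn.
Qed.

Lemma size_pderiv_seq nu : size (pderiv_seq nu) = mabs nu.
Proof.
rewrite size_flatten /shape -map_comp /mabs sumnE big_map enumT.
by apply: eq_bigr => i _; rewrite /= size_nseq.
Qed.

End Monomial.

Section PulledBackMonomial.
Variables (R : realType) (m : nat) (a : R) (mu : 'I_m -> R).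

Definition root_exponent (n : 'I_m -> nat) (k : nat) : 'I_m -> R :=
  fun j => (n j)%:R * mu j / k%:R.

Definition root_coef (k : nat) : R := Num.sg a * `|a| `^ k%:R^-1.

Lemma prod_phi_powR_root n k (x : 'rV[R]_m) : orthant x ->
  (\prod_(j < m) (x 0 j ^+ n j) `^ mu j) `^ k%:R^-1 =
  \prod_(j < m) x 0 j `^ root_exponent n k j.
Proof.
move=> x0; rewrite powR_prod => [|j]; last exact: powR_ge0.
apply: eq_bigr => j _; rewrite -powR_mulrn ?(ltW (x0 j)) // -!powRrM.
by rewrite /root_exponent mulrA.
Qed.

Lemma monomial_phiE n (x : 'rV[R]_m) :
  monomial a mu (phi_map n x) = a * \prod_(j < m) (x 0 j ^+ n j) `^ mu j.
Proof. by rewrite /monomial; congr (_ * _); apply: eq_bigr => j _; rewrite mxE. Qed.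

Lemma kroot_monomial_phi n k (x : 'rV[R]_m) : orthant x ->
  kroot k (monomial a mu \o phi_map n) x = monomial (root_coef k) (root_exponent n k) x.
Proof.
move=> x0; rewrite /kroot /= monomial_phiE; set P := \prod_(j < m) _.
have P0 : 0 < P by apply: prodr_gt0 => j _; apply/powR_gt0/exprn_gt0.
rewrite sgrM (gtr0_sg P0) mulr1 normrM (gtr0_norm P0) powRM ?normr_ge0 ?(ltW P0) //.
by rewrite prod_phi_powR_root // /monomial /root_coef mulrA.
Qed.

Lemma root_monomial_ipartial_exponentE n k s (x : 'rV[R]_m) : orthant x ->
  `|a| `^ k%:R^-1 * \prod_(j < m) x 0 j `^ ipartial_exponent (root_exponent n k) s j =
  `|monomial a mu (phi_map n x)| `^ k%:R^-1 / \prod_(i <- s) x 0 i.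
Proof.
move=> x0; have P0 : 0 <= \prod_(j < m) (x 0 j ^+ n j) `^ mu j.
  by apply: prodr_ge0 => j _; exact: powR_ge0.
rewrite monomial_phiE normrM (ger0_norm P0) powRM ?normr_ge0 // prod_phi_powR_root //.
rewrite -(prod_count_mem _ s) -mulrA -prodfV -big_split /=.
congr (_ * _); apply: eq_bigr => j _.
by rewrite powRB ?(lt0r_neq0 (x0 j)) ?implybT // powR_mulrn // ltW.
Qed.

Definition mild_constA : R := 1 + \sum_(j < m) `|mu j|.

(* The terms with mu j = 0 vanish (x / 0 = 0); those directions are handled by
   [ipartial_coef_eq0] instead. *)
Definition mild_constB (M : R) : R := 1 + `|M| + \sum_(j < m) `|M| / `|mu j|.

Lemma mild_constA_gt0 : 0 < mild_constA.
Proof. by rewrite /mild_constA ltr_pwDl ?sumr_ge0. Qed.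

Lemma mild_constB_ge1 (M : R) : 1 <= mild_constB M.
Proof.
by rewrite /mild_constB -addrA lerDl addr_ge0 ?sumr_ge0 // => j _; rewrite divr_ge0.
Qed.

Lemma normr_le_mild_constB (M : R) : `|M| <= mild_constB M.
Proof.
by rewrite /mild_constB -addrA addrCA lerDl addr_ge0 ?sumr_ge0 // => j _; rewrite divr_ge0.
Qed.

Lemma root_exponent_bound n k j : (0 < k)%N -> (0 < n j)%N ->
  `|root_exponent n k j| + 1 <= (\max_(i < m) n i)%:R * mild_constA.
Proof.
move=> k0 nj0.
have nj_max : (n j)%:R <= (\max_(i < m) n i)%:R :> R by rewrite ler_nat leq_bigmax.
have nj1 : 1 <= (n j)%:R :> R by rewrite ler1n.
have mu_sum : `|mu j| <= \sum_(i < m) `|mu i|.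
  by rewrite (bigD1 j) //= lerDl sumr_ge0.
have root_le : `|root_exponent n k j| <= (n j)%:R * `|mu j|.
  rewrite /root_exponent normrM normfV !normr_nat normrM normr_nat.
  rewrite ler_pdivrMr ?ltr0n // ler_peMr ?mulr_ge0 // ler1n //.
have := normr_ge0 (mu j); rewrite /mild_constA; nra.
Qed.

Lemma monomial_le_coord (M : R) (y : 'rV[R]_m) i : orthant y -> mu i != 0 ->
  `|partial i (monomial a mu) y| <= M ->
  `|monomial a mu y| <= mild_constB M * y 0 i.
Proof.
move=> y0 mui0; have [_ ->] := monomial_partial a mu i y0.
rewrite (monomial_factor a mu i y0); set Q := monomial a _ y.
have -> : monomial (a * mu i) (fun j => mu j - (j == i)%:R) y = mu i * Q.
  by rewrite /Q /monomial; ring.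
move=> muQ; rewrite normrM (gtr0_norm (y0 i)) mulrC.
apply: ler_wpM2r; first exact: ltW.
have Q_le : `|Q| <= `|M| / `|mu i|.
  by rewrite ler_pdivlMr ?normr_gt0 // mulrC -normrM (le_trans muQ) ?ler_norm.
apply: le_trans Q_le _; rewrite /mild_constB (bigD1 i) //= addrCA lerDl.
by rewrite !addr_ge0 ?sumr_ge0 // => j _; rewrite divr_ge0.
Qed.

Section Bounds.
Variables (M : R) (n : 'I_m -> nat) (k r : nat).
Hypotheses (k_gt0 : (0 < k)%N) (r_gt0 : (0 < r)%N) (n_ge : forall j, (k * r <= n j)%N).

Lemma root_monomial_le x s : unit_cube x ->
  `|monomial a mu (phi_map n x)| <= M ->
  (forall i, `|partial i (monomial a mu) (phi_map n x)| <= M) ->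
  (size s <= r)%N -> {in s, forall j, mu j != 0} ->
  `|root_coef k| * \prod_(j < m) x 0 j `^ ipartial_exponent (root_exponent n k) s j
    <= mild_constB M.
Proof.
move=> x_cube b_le partial_le sr mu_s.
have x0 := unit_cube_orthant x_cube.
have phi0 : orthant (phi_map n x) by move=> j; rewrite mxE exprn_gt0.
have B1 := mild_constB_ge1 M.
have coef_le : `|root_coef k| <= `|a| `^ k%:R^-1.
  rewrite /root_coef normrM normr_sg ger0_norm ?powR_ge0 //.
  by case: (a != 0); rewrite ?mul1r ?mul0r ?powR_ge0.
have P0 : 0 <= \prod_(j < m) x 0 j `^ ipartial_exponent (root_exponent n k) s j.
  by apply: prodr_ge0 => j _; exact: powR_ge0.
apply: le_trans (ler_wpM2r P0 coef_le) _.
rewrite root_monomial_ipartial_exponentE // ler_pdivrMr ?prodr_gt0 //.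
apply: (@powR_inv_le_prod _ _ _ _ _ _ k r) => // [|j js].
  by rewrite normr_ge0 (le_trans b_le) // (le_trans (ler_norm M)) // normr_le_mild_constB.
split; first exact/ltW/x0.
apply: le_trans (monomial_le_coord phi0 (mu_s j js) (partial_le j)) _.
rewrite ler_wpM2l ?(le_trans ler01 B1) // mxE.
case/andP: (x_cube j) => /ltW xj0 /ltW xj1.
by have := ler_wiXn2l xj0 xj1 (n_ge j).
Qed.

Lemma ipartial_root_bound x s : unit_cube x ->
  `|monomial a mu (phi_map n x)| <= M ->
  (forall i, `|partial i (monomial a mu) (phi_map n x)| <= M) ->
  (size s <= r)%N ->
  `|monomial (root_coef k * ipartial_coef (root_exponent n k) s)
             (ipartial_exponent (root_exponent n k) s) x|
    <= mild_constB M * ((\max_(i < m) n i)%:R * mild_constA) ^+ size s * (size s)`!%:R.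
Proof.
move=> x_cube b_le partial_le sr.
have B0 : 0 < mild_constB M := lt_le_trans ltr01 (mild_constB_ge1 M).
have A0 := mild_constA_gt0.
case: (boolP [exists j, (j \in s) && (mu j == 0)]) =>
    [/existsP[j /andP[js /eqP muj0]] | /existsPn mu_s].
  rewrite /monomial (ipartial_coef_eq0 js) ?mulr0 ?mul0r ?normr0; last first.
    by rewrite /root_exponent muj0 mulr0 mul0r.
  by rewrite !mulr_ge0 ?exprn_ge0 ?mulr_ge0 ?(ltW B0) ?(ltW A0).
have mu_s_neq0 : {in s, forall j, mu j != 0}.
  by move=> j js; have := mu_s j; rewrite js.
have n_gt0 j : (0 < n j)%N by apply: leq_trans (n_ge j); rewrite muln_gt0 k_gt0.
have coef_le := ipartial_coef_bound s (fun j => root_exponent_bound k_gt0 (n_gt0 j)).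
have P0 : 0 <= \prod_(j < m) x 0 j `^ ipartial_exponent (root_exponent n k) s j.
  by apply: prodr_ge0 => j _; exact: powR_ge0.
rewrite /monomial normrM (ger0_norm P0) normrM mulrAC -[X in _ <= X]mulrA.
apply: ler_pM; rewrite ?mulr_ge0 //.
exact: root_monomial_le.
Qed.

End Bounds.

End PulledBackMonomial.

Theorem mainTheorem4 (R : realType) (m : nat) (U : set 'rV[R]_m)
  (a : R) (mu : 'I_m -> R) :
  open U -> U `<=` @unit_cube R m ->
  C1_bounded U (monomial a mu) ->
  exists A B : R, 0 < A /\ 0 < B /\
    forall (r l : nat) (n : 'I_m -> nat), (0 < r)%N -> (1 <= l)%N ->
      (forall i, (r ^ l <= n i)%N) ->
      mild (@unit_cube R m `&` (phi_map n @^-1` U))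
        ((\max_(i < m) n i)%:R * A) B 0 r
        (kroot (r ^ l.-1) (monomial a mu \o phi_map n)).
Proof.
move=> _ _ [_ [M b_bounded]].
exists (mild_constA mu), (mild_constB mu M).
split; first exact: mild_constA_gt0.
split; first exact: lt_le_trans ltr01 (mild_constB_ge1 mu M).
move=> r l n r_gt0 l_ge1 n_ge.
have k_gt0 : (0 < r ^ l.-1)%N by rewrite expn_gt0 r_gt0.
have n_ge_kr j : (r ^ l.-1 * r <= n j)%N by rewrite -expnSr prednK.
have g_monomial := kroot_monomial_phi a mu n (r ^ l.-1).
split; first by apply: (Cr_monomial g_monomial) => x [/unit_cube_orthant].
move=> x [x_cube Ux] nu nu_le.
have [b_le partial_le] := b_bounded _ Ux.
rewrite pderiv_ipartial (ipartial_monomial g_monomial _ (unit_cube_orthant x_cube)).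
rewrite add0r !powRr1 ?ler0n ?(le_trans ler01 (mild_constB_ge1 mu M)) //.
rewrite -size_pderiv_seq in nu_le *.
exact: (ipartial_root_bound k_gt0 r_gt0 n_ge_kr x_cube b_le partial_le nu_le).
Qed.
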